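(* Let $A=A_{\bar 0}\oplus A_{\bar 1}$ be a finite-dimensional associative superalgebra over an algebraically closed field $\mathbb{K}$ of characteristic zero. Then $A$ admits an odd-symmetric structure if and only if there exists an isomorphism of $A_{\bar 0}$-bimodules $\phi:A_{\bar 1}\to A_{\bar 0}^*$ such that $\phi(x)(y.z)=\phi(z)(x.y)$ for all $x,y,z\in A_{\bar 1}$.
   Context: A superalgebra is a $\mathbb{Z}_2$-graded algebra $A=A_{\bar 0}\oplus A_{\bar 1}$ with $A_\alpha A_\beta\subseteq A_{\alpha+\beta}$; $|x|$ denotes the degree of a homogeneous element. A bilinear form $B$ on $A$ is odd if $B(A_{\bar 0},A_{\bar 0})=B(A_{\bar 1},A_{\bar 1})=\{0\}$; supersymmetric if $B(x,y)=(-1)^{|x||y|}B(y,x)$ for homogeneous $x,y$; associative if $B(x.y,z)=B(x,y.z)$; non-degenerate if $B(x,A)=\{0\}$ implies $x=0$. An odd-symmetric structure on $A$ is an odd, supersymmetric, associative, non-degenerate bilinear form on $A$. $A_{\bar 1}$ is an $A_{\bar 0}$-bimodule via left and right multiplication, and $A_{\bar 0}^*$ is an $A_{\bar 0}$-bimodule via $(x\cdot f)(y)=f(y.x)$ and $(f\cdot x)(y)=f(x.y)$ for $x,y\in A_{\bar 0}$, $f\in A_{\bar 0}^*$. *)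

From HB Require Import structures.
From mathcomp Require Import all_boot all_order all_algebra all_field.
Unset Printing Implicit Defensive.
Import Order.TTheory GRing.Theory Num.Theory.
Local Open Scope ring_scope.

Section Super.
Context {K : fieldType} {A : vectType K}.

Definition bilinear_map (V : lmodType K) (f : A -> A -> V) : Prop :=
  (forall (a : K) (x y z : A), f (a *: x + y) z = a *: f x z + f y z) /\
  (forall (a : K) (x y z : A), f x (a *: y + z) = a *: f x y + f x z).

Definition assoc_superalgebra (mul : A -> A -> A) (A0 A1 : {vspace A}) : Prop :=
  [/\ @bilinear_map A mul,
      (forall x y z, mul (mul x y) z = mul x (mul y z)),
      (A0 + A1)%VS = fullv, directv (A0 + A1)%VS &
      (forall x y, [/\ (x \in A0 -> y \in A0 -> mul x y \in A0),
                       (x \in A0 -> y \in A1 -> mul x y \in A1),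
                       (x \in A1 -> y \in A0 -> mul x y \in A1) &
                       (x \in A1 -> y \in A1 -> mul x y \in A0)])].

Definition odd_form (A0 A1 : {vspace A}) (B : A -> A -> K^o) : Prop :=
  forall x y, (x \in A0 -> y \in A0 -> B x y = 0) /\ (x \in A1 -> y \in A1 -> B x y = 0).

(* supersymmetric: B(x,y) = (-1)^{|x||y|} B(y,x) for homogeneous x, y *)
Definition supersymmetric_form (A0 A1 : {vspace A}) (B : A -> A -> K^o) : Prop :=
  forall x y, [/\ (x \in A0 -> y \in A0 -> B x y = B y x),
                  (x \in A0 -> y \in A1 -> B x y = B y x),
                  (x \in A1 -> y \in A0 -> B x y = B y x) &
                  (x \in A1 -> y \in A1 -> B x y = - B y x)].

Definition associative_form (mul : A -> A -> A) (B : A -> A -> K^o) : Prop :=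
  forall x y z, B (mul x y) z = B x (mul y z).

Definition nondegenerate_form (B : A -> A -> K^o) : Prop :=
  forall x, (forall y, B x y = 0) -> x = 0.

Definition odd_symmetric_structure (mul : A -> A -> A) (A0 A1 : {vspace A})
    (B : A -> A -> K^o) : Prop :=
  [/\ @bilinear_map K^o B, odd_form A0 A1 B, supersymmetric_form A0 A1 B,
      associative_form mul B & nondegenerate_form B].

Definition lact1 (mul : A -> A -> A) (A0 A1 : {vspace A})
    (a : subvs_of A0) (v : subvs_of A1) : subvs_of A1 :=
  vsproj A1 (mul (vsval a) (vsval v)).
Definition ract1 (mul : A -> A -> A) (A0 A1 : {vspace A})
    (v : subvs_of A1) (a : subvs_of A0) : subvs_of A1 :=
  vsproj A1 (mul (vsval v) (vsval a)).
Definition mul0 (mul : A -> A -> A) (A0 : {vspace A})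
    (a b : subvs_of A0) : subvs_of A0 :=
  vsproj A0 (mul (vsval a) (vsval b)).
Definition mul11 (mul : A -> A -> A) (A0 A1 : {vspace A})
    (u v : subvs_of A1) : subvs_of A0 :=
  vsproj A0 (mul (vsval u) (vsval v)).

Definition lact_dual (mul : A -> A -> A) (A0 : {vspace A})
    (x : subvs_of A0) (f : 'Hom(subvs_of A0, K^o)) : subvs_of A0 -> K^o :=
  fun y => f (mul0 mul A0 y x).
Definition ract_dual (mul : A -> A -> A) (A0 : {vspace A})
    (f : 'Hom(subvs_of A0, K^o)) (x : subvs_of A0) : subvs_of A0 -> K^o :=
  fun y => f (mul0 mul A0 x y).

Definition bimodule_iso (mul : A -> A -> A) (A0 A1 : {vspace A})
    (phi : subvs_of A1 -> 'Hom(subvs_of A0, K^o)) : Prop :=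
  [/\ (forall (c : K) u v, phi (c *: u + v) = c *: phi u + phi v),
      bijective phi,
      (forall a v, (phi (lact1 mul A0 A1 a v) : subvs_of A0 -> K^o) =1 lact_dual mul A0 a (phi v)) &
      (forall v a, (phi (ract1 mul A0 A1 v a) : subvs_of A0 -> K^o) =1 ract_dual mul A0 (phi v) a)].

End Super.

From HB Require Import structures.
From mathcomp Require Import all_boot all_order all_algebra all_field.
Import GRing.Theory.
Set Implicit Arguments.
Unset Strict Implicit.
Local Open Scope ring_scope.

(* An odd form B pairs A1 with A0 only, so it is the same thing as the map
   phi : A1 -> A0^*, phi(x)(y) = B(x, y); conversely phi gives back
   B(x, y) = phi(x1)(y0) + phi(y1)(x0) on the homogeneous components.
   Splitting the associativity of B into homogeneous cases, the cases with
   exactly one odd argument are the two bimodule laws of phi, the case with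
   three odd arguments is the cyclic identity, and all other cases vanish.
   Nondegeneracy of B amounts to phi being injective and A0 being separated by
   phi(A1); applied also to the injection A0 -> A1^*, it forces
   dim A0 = dim A1, so the injective phi is bijective. *)

Section LinearMaps.
Variables (K : fieldType) (aT rT : vectType K).

Definition linear_fun (f : aT -> rT) (fL : linear f) : aT -> rT := f.
HB.instance Definition _ f fL :=
  GRing.isLinear.Build K aT rT *:%R (@linear_fun f fL) fL.

Definition lfun_of_linear (f : aT -> rT) (fL : linear f) : 'Hom(aT, rT) :=
  linfun (linear_fun fL).

Lemma lfun_of_linearE (f : aT -> rT) (fL : linear f) x :
  lfun_of_linear fL x = f x.
Proof. by rewrite lfunE. Qed.

Lemma lker_lfun_of_linear (f : aT -> rT) (fL : linear f) :
  (forall x, f x = 0 -> x = 0) -> lker (lfun_of_linear fL) = 0%VS.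
Proof.
move=> f0; apply/eqP; rewrite -subv0; apply/subvP => x.
by rewrite memv_ker lfun_of_linearE memv0 => /eqP/f0->.
Qed.

Lemma linear_ker0_dim_le (f : aT -> rT) :
  linear f -> (forall x, f x = 0 -> x = 0) -> (dim aT <= dim rT)%N.
Proof.
move=> fL /(lker_lfun_of_linear fL) ker0.
rewrite -dimvf -(limg_dim_eq (f := lfun_of_linear fL)) ?ker0 ?capv0 //.
by rewrite -[dim rT]dimvf dimvS ?subvf.
Qed.

Lemma linear_ker0_bij (f : aT -> rT) :
  linear f -> (forall x, f x = 0 -> x = 0) -> (dim rT <= dim aT)%N ->
  bijective f.
Proof.
move=> fL /(lker_lfun_of_linear fL) ker0 dim_rT; set g := lfun_of_linear fL.
have img_full : limg g = fullv.
  apply/eqP; rewrite eqEdim subvf limg_dim_eq ?ker0 ?capv0 //.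
  by rewrite !dimvf.
exists g^-1%VF => x; first by rewrite -(lfun_of_linearE fL) lker0_lfunK ?ker0.
by rewrite -(lfun_of_linearE fL) limg_lfunVK // img_full memvf.
Qed.

End LinearMaps.

Lemma dim_dual (K : fieldType) (vT : vectType K) : dim 'Hom(vT, K^o) = dim vT.
Proof. exact: muln1. Qed.

Lemma lfun_dual_separates (K : fieldType) (vT : vectType K) (w : vT) :
  (forall f : 'Hom(vT, K^o), f w = 0) -> w = 0.
Proof.
move=> w_ann; rewrite (coord_vbasis (memvf w)); apply: big1 => i _.
have coordL : linear (coord (vbasis fullv) i : vT -> K^o) := coord_is_scalar _ _.
by rewrite -(lfun_of_linearE coordL) w_ann scale0r.
Qed.

Section Superalgebra.
Variables (K : fieldType) (A : vectType K) (mul : A -> A -> A).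
Variables (A0 A1 : {vspace A}).
Hypothesis hA : assoc_superalgebra mul A0 A1.

Lemma mulDl x y z : mul (x + y) z = mul x z + mul y z.
Proof. by have [[mulL _] _ _ _ _] := hA; rewrite -[x]scale1r mulL !scale1r. Qed.

Lemma mulDr x y z : mul x (y + z) = mul x y + mul x z.
Proof. by have [[_ mulR] _ _ _ _] := hA; rewrite -[y]scale1r mulR !scale1r. Qed.

Lemma mulA0A0 x y : x \in A0 -> y \in A0 -> mul x y \in A0.
Proof. by case: hA => _ _ _ _ /(_ x y) []. Qed.
Lemma mulA0A1 x y : x \in A0 -> y \in A1 -> mul x y \in A1.
Proof. by case: hA => _ _ _ _ /(_ x y) []. Qed.
Lemma mulA1A0 x y : x \in A1 -> y \in A0 -> mul x y \in A1.
Proof. by case: hA => _ _ _ _ /(_ x y) []. Qed.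
Lemma mulA1A1 x y : x \in A1 -> y \in A1 -> mul x y \in A0.
Proof. by case: hA => _ _ _ _ /(_ x y) []. Qed.

Lemma capA0A1 : (A0 :&: A1 = 0)%VS.
Proof. by case: hA => _ _ _ /directv_addP. Qed.

Definition pr0 := daddv_pi A0 A1.
Definition pr1 := daddv_pi A1 A0.

Lemma pr0_add_pr1 x : pr0 x + pr1 x = x.
Proof. by case: hA => _ _ full _ _; rewrite daddv_pi_add ?capA0A1 ?full ?memvf. Qed.

Lemma memv_pr0 x : pr0 x \in A0. Proof. exact: memv_pi. Qed.
Lemma memv_pr1 x : pr1 x \in A1. Proof. exact: memv_pi. Qed.

Lemma pr0_id x : x \in A0 -> pr0 x = x. Proof. exact: daddv_pi_id capA0A1. Qed.
Lemma pr1_id x : x \in A1 -> pr1 x = x.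
Proof. by apply: daddv_pi_id; rewrite capvC capA0A1. Qed.

Lemma pr0_A1 x : x \in A1 -> pr0 x = 0.
Proof. by move=> x1; apply: (@addIr _ (pr1 x)); rewrite pr0_add_pr1 pr1_id ?add0r. Qed.
Lemma pr1_A0 x : x \in A0 -> pr1 x = 0.
Proof. by move=> x0; apply: (@addrI _ (pr0 x)); rewrite pr0_add_pr1 pr0_id ?addr0. Qed.

Section FormToBimoduleIso.
Variable B : A -> A -> K^o.
Hypothesis hB : odd_symmetric_structure mul A0 A1 B.

Lemma form_linearl c x y z : B (c *: x + y) z = c *: B x z + B y z.
Proof. by have [[BL _] _ _ _ _] := hB. Qed.
Lemma form_linearr c x y z : B x (c *: y + z) = c *: B x y + B x z.
Proof. by have [[_ BR] _ _ _ _] := hB. Qed.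

Lemma form_addr x y z : B x (y + z) = B x y + B x z.
Proof. by rewrite -[y]scale1r form_linearr !scale1r. Qed.

Lemma form_assoc x y z : B (mul x y) z = B x (mul y z).
Proof. by have [_ _ _ Bassoc _] := hB; apply: Bassoc. Qed.

Lemma form_nondegenerate x : (forall y, B x y = 0) -> x = 0.
Proof. by have [_ _ _ _ Bnondeg] := hB; apply: Bnondeg. Qed.

Lemma form_A0A0 x y : x \in A0 -> y \in A0 -> B x y = 0.
Proof. by have [_ /(_ x y)[B00 _] _ _ _] := hB. Qed.
Lemma form_A1A1 x y : x \in A1 -> y \in A1 -> B x y = 0.
Proof. by have [_ /(_ x y)[_ B11] _ _ _] := hB. Qed.
Lemma form_symA0A1 x y : x \in A0 -> y \in A1 -> B x y = B y x.
Proof. by have [_ _ /(_ x y)[_ B01 _ _] _ _] := hB. Qed.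
Lemma form_symA1A0 x y : x \in A1 -> y \in A0 -> B x y = B y x.
Proof. by have [_ _ /(_ x y)[_ _ B10 _] _ _] := hB. Qed.

Section FormDual.
Variables U V : {vspace A}.

Fact form_dual_subproof (u : subvs_of U) :
  linear (fun v : subvs_of V => B (vsval u) (vsval v) : K^o).
Proof. by move=> c v w; rewrite linearP form_linearr. Qed.

Definition form_dual (u : subvs_of U) : 'Hom(subvs_of V, K^o) :=
  lfun_of_linear (form_dual_subproof u).

Lemma form_dualE u v : form_dual u v = B (vsval u) (vsval v).
Proof. exact: lfun_of_linearE. Qed.

Lemma form_dual_linear : linear form_dual.
Proof.
move=> c u w; apply/lfunP => v.
by rewrite add_lfunE scale_lfunE !form_dualE linearP form_linearl.
Qed.

Lemma form_dual_eq0 : (U + V)%VS = fullv ->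
  {in U &, forall u u', B u u' = 0} -> forall u, form_dual u = 0 -> u = 0.
Proof.
move=> UV_full BUU u /lfunP Bu0; apply/val_inj/form_nondegenerate => y.
have /memv_addP[y0 y0U [y1 y1V ->]] : y \in (U + V)%VS by rewrite UV_full memvf.
rewrite form_addr BUU ?subvsP // add0r.
by have := Bu0 (vsproj V y1); rewrite form_dualE zero_lfunE vsprojK.
Qed.

End FormDual.

Lemma odd_symmetric_bimodule_iso :
  exists phi : subvs_of A1 -> 'Hom(subvs_of A0, K^o),
    bimodule_iso mul A0 A1 phi /\
    forall x y z : subvs_of A1,
      phi x (mul11 mul A0 A1 y z) = phi z (mul11 mul A0 A1 x y).
Proof.
have full01 : (A0 + A1)%VS = fullv by have [] := hA.
have full10 : (A1 + A0)%VS = fullv by rewrite addvC.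
have phi_ker0 := form_dual_eq0 full10 form_A1A1.
have psi_ker0 := form_dual_eq0 full01 form_A0A0.
exists (@form_dual A1 A0); split; last first.
  move=> x y z; rewrite !form_dualE /mul11 !vsprojK ?mulA1A1 ?subvsP //.
  by rewrite -form_assoc form_symA0A1 ?mulA1A1 ?subvsP.
split.
- exact: form_dual_linear.
- apply: linear_ker0_bij (@form_dual_linear _ _) phi_ker0 _.
  have := linear_ker0_dim_le (@form_dual_linear A0 A1) psi_ker0.
  by rewrite !dim_dual.
- move=> a v y; rewrite /lact_dual /lact1 /mul0 !form_dualE !vsprojK;
    rewrite ?mulA0A1 ?mulA0A0 ?subvsP //.
  by rewrite form_symA1A0 ?mulA0A1 ?subvsP // -form_assoc form_symA0A1 ?mulA0A0 ?subvsP.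
- move=> v a y; rewrite /ract_dual /ract1 /mul0 !form_dualE !vsprojK;
    rewrite ?mulA1A0 ?mulA0A0 ?subvsP //.
  exact: form_assoc.
Qed.

End FormToBimoduleIso.

Section BimoduleIsoToForm.
Variable phi : subvs_of A1 -> 'Hom(subvs_of A0, K^o).
Hypothesis hphi : bimodule_iso mul A0 A1 phi.
Hypothesis phi_cyclic : forall x y z : subvs_of A1,
  phi x (mul11 mul A0 A1 y z) = phi z (mul11 mul A0 A1 x y).

Lemma phi_linear : linear phi.
Proof. by have [] := hphi. Qed.

Lemma phi0 : phi 0 = 0.
Proof. by rewrite -(lfun_of_linearE phi_linear) linear0. Qed.

Definition pairing x y := phi (vsproj A1 x) (vsproj A0 y).

Lemma pairing_linearl c x y z :
  pairing (c *: x + y) z = c *: pairing x z + pairing y z.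
Proof. by rewrite /pairing linearP phi_linear add_lfunE scale_lfunE. Qed.

Lemma pairing_linearr c x y z :
  pairing x (c *: y + z) = c *: pairing x y + pairing x z.
Proof. by rewrite /pairing !linearP. Qed.

Lemma pairing0l y : pairing 0 y = 0.
Proof. by rewrite /pairing linear0 phi0 zero_lfunE. Qed.

Lemma pairing0r x : pairing x 0 = 0.
Proof. by rewrite /pairing !linear0. Qed.

Lemma pairing_ract x y w : x \in A1 -> y \in A0 -> w \in A0 ->
  pairing (mul x y) w = pairing x (mul y w).
Proof.
move=> x1 y0 w0; have [_ _ _ ract] := hphi.
have := ract (vsproj A1 x) (vsproj A0 y) (vsproj A0 w).
by rewrite /ract1 /ract_dual /mul0 /pairing !vsprojK.
Qed.

Lemma pairing_lact x y w : x \in A0 -> y \in A1 -> w \in A0 ->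
  pairing (mul x y) w = pairing y (mul w x).
Proof.
move=> x0 y1 w0; have [_ _ lact _] := hphi.
have := lact (vsproj A0 x) (vsproj A1 y) (vsproj A0 w).
by rewrite /lact1 /lact_dual /mul0 /pairing !vsprojK.
Qed.

Lemma pairing_cyclic x y z : x \in A1 -> y \in A1 -> z \in A1 ->
  pairing x (mul y z) = pairing z (mul x y).
Proof.
move=> x1 y1 z1; have := phi_cyclic (vsproj A1 x) (vsproj A1 y) (vsproj A1 z).
by rewrite /mul11 /pairing !vsprojK.
Qed.

Definition phi_form x y : K^o := pairing (pr1 x) (pr0 y) + pairing (pr1 y) (pr0 x).

Lemma phi_form_sym x y : phi_form x y = phi_form y x.
Proof. exact: addrC. Qed.

Lemma phi_form_linearl c x y z :
  phi_form (c *: x + y) z = c *: phi_form x z + phi_form y z.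
Proof.
by rewrite /phi_form !linearP pairing_linearl pairing_linearr scalerDr addrACA.
Qed.

Lemma phi_form_linearr c x y z :
  phi_form x (c *: y + z) = c *: phi_form x y + phi_form x z.
Proof. by rewrite !(phi_form_sym x) phi_form_linearl. Qed.

Lemma phi_form_A0A0 x y : x \in A0 -> y \in A0 -> phi_form x y = 0.
Proof. by move=> x0 y0; rewrite /phi_form !pr1_A0 // !pairing0l addr0. Qed.

Lemma phi_form_A1A1 x y : x \in A1 -> y \in A1 -> phi_form x y = 0.
Proof. by move=> x1 y1; rewrite /phi_form !pr0_A1 // !pairing0r addr0. Qed.

Lemma phi_form_A1A0 x y : x \in A1 -> y \in A0 -> phi_form x y = pairing x y.
Proof.
by move=> x1 y0; rewrite /phi_form pr1_id // pr0_id // pr1_A0 // pairing0l addr0.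
Qed.

Lemma phi_form_A0A1 x y : x \in A0 -> y \in A1 -> phi_form x y = pairing y x.
Proof. by move=> x0 y1; rewrite phi_form_sym phi_form_A1A0. Qed.

Lemma phi_form_assoc x y z : phi_form (mul x y) z = phi_form x (mul y z).
Proof.
have phi_formDl u v w : phi_form (u + v) w = phi_form u w + phi_form v w.
  by rewrite -[u]scale1r phi_form_linearl !scale1r.
have phi_formDr u v w : phi_form u (v + w) = phi_form u v + phi_form u w.
  by rewrite -[v]scale1r phi_form_linearr !scale1r.
rewrite -(pr0_add_pr1 x) -(pr0_add_pr1 y) -(pr0_add_pr1 z).
move: (memv_pr0 x) (memv_pr1 x) (memv_pr0 y) (memv_pr1 y) (memv_pr0 z) (memv_pr1 z).
move: (pr0 x) (pr1 x) (pr0 y) (pr1 y) (pr0 z) (pr1 z).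
move=> x0 x1 y0 y1 z0 z1 x0A x1A y0A y1A z0A z1A.
rewrite !mulDl !mulDr !phi_formDl !phi_formDr.
have -> : phi_form (mul x0 y0) z0 = phi_form x0 (mul y0 z0)
  by rewrite !phi_form_A0A0 ?mulA0A0.
have -> : phi_form (mul x1 y1) z0 = phi_form x1 (mul y1 z0)
  by rewrite phi_form_A0A0 ?mulA1A1 // phi_form_A1A1 ?mulA1A0.
have -> : phi_form (mul x1 y0) z1 = phi_form x1 (mul y0 z1)
  by rewrite phi_form_A1A1 ?mulA1A0 // phi_form_A1A1 ?mulA0A1.
have -> : phi_form (mul x0 y1) z1 = phi_form x0 (mul y1 z1)
  by rewrite phi_form_A1A1 ?mulA0A1 // phi_form_A0A0 ?mulA1A1.
have -> : phi_form (mul x1 y0) z0 = phi_form x1 (mul y0 z0)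
  by rewrite phi_form_A1A0 ?mulA1A0 // phi_form_A1A0 ?mulA0A0 // pairing_ract.
have -> : phi_form (mul x0 y1) z0 = phi_form x0 (mul y1 z0)
  by rewrite phi_form_A1A0 ?mulA0A1 // phi_form_A0A1 ?mulA1A0 // pairing_lact // pairing_ract.
have -> : phi_form (mul x0 y0) z1 = phi_form x0 (mul y0 z1)
  by rewrite phi_form_A0A1 ?mulA0A0 // phi_form_A0A1 ?mulA0A1 // pairing_lact.
have -> : phi_form (mul x1 y1) z1 = phi_form x1 (mul y1 z1)
  by rewrite phi_form_A0A1 ?mulA1A1 // phi_form_A1A0 ?mulA1A1 // (pairing_cyclic x1A).
by [].
Qed.

Lemma phi_form_A0r x y : y \in A0 -> phi_form x y = pairing (pr1 x) y.
Proof. by move=> y0; rewrite /phi_form (pr0_id y0) (pr1_A0 y0) pairing0l addr0. Qed.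

Lemma phi_form_A1r x y : y \in A1 -> phi_form x y = pairing y (pr0 x).
Proof. by move=> y1; rewrite /phi_form (pr0_A1 y1) (pr1_id y1) pairing0r add0r. Qed.

Lemma phi_form_nondegenerate x : (forall y, phi_form x y = 0) -> x = 0.
Proof.
move=> x_ann; have [_ [psi phiK psiK] _ _] := hphi.
have odd0 : vsproj A1 (pr1 x) = 0.
  apply: (can_inj phiK); rewrite phi0; apply/lfunP => a.
  have := x_ann (vsval a); rewrite phi_form_A0r ?subvsP //.
  by rewrite /pairing vsvalK zero_lfunE.
have even0 : vsproj A0 (pr0 x) = 0.
  apply: lfun_dual_separates => f; rewrite -(psiK f).
  have := x_ann (vsval (psi f)); by rewrite phi_form_A1r ?subvsP // /pairing vsvalK; apply.
rewrite -(pr0_add_pr1 x) -(vsprojK (memv_pr0 x)) -(vsprojK (memv_pr1 x)).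
by rewrite even0 odd0 !linear0 addr0.
Qed.

Lemma bimodule_iso_odd_symmetric :
  exists B : A -> A -> K^o, odd_symmetric_structure mul A0 A1 B.
Proof.
exists phi_form; split.
- by split; [exact: phi_form_linearl | exact: phi_form_linearr].
- by move=> x y; split; [exact: phi_form_A0A0 | exact: phi_form_A1A1].
- move=> x y; split=> xA yA; try exact: phi_form_sym.
  by rewrite !phi_form_A1A1 ?oppr0.
- exact: phi_form_assoc.
- exact: phi_form_nondegenerate.
Qed.

End BimoduleIsoToForm.
End Superalgebra.

Theorem mainTheorem2 (K : closedFieldType) (hK : [pchar K] =i pred0)
    (A : vectType K) (mul : A -> A -> A) (A0 A1 : {vspace A})
    (hA : assoc_superalgebra mul A0 A1) :
  (exists B : A -> A -> K^o, odd_symmetric_structure mul A0 A1 B) <->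
  (exists phi : subvs_of A1 -> 'Hom(subvs_of A0, K^o),
      bimodule_iso mul A0 A1 phi /\
      forall x y z : subvs_of A1,
        phi x (mul11 mul A0 A1 y z) = phi z (mul11 mul A0 A1 x y)).
Proof.
split=> [[B hB] | [phi [hphi phi_cyclic]]].
- exact: odd_symmetric_bimodule_iso hB.
- exact: bimodule_iso_odd_symmetric hphi phi_cyclic.
Qed.
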